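(* Let $(\Omega,\mathbb B(\Omega),\mu,T)$ be a measure-preserving dynamical system and $\mathbf X$ an $\mathbb R^N$-valued random vector on $(\Omega,\mathbb B(\Omega))$. Then for all $d\in\mathbb N$, $$h^{\mathbf X}_{\mu,\mathrm{cond}}(T,d)\le h^{\mathbf X}_{\mu,\triangle}(T,d).$$ Moreover, if for some $d_0\in\mathbb N$ it holds $h^{\mathbf X}_\mu(T,d_0+1)\le h^{\mathbf X}_\mu(T,d_0)$, then $$h^{\mathbf X}_{\mu,\mathrm{cond}}(T,d_0)\le h^{\mathbf X}_{\mu,\triangle}(T,d_0)\le h^{\mathbf X}_{\mu}(T,d_0).$$
   Context: A measure-preserving dynamical system $(\Omega,\mathbb B(\Omega),\mu,T)$ consists of a nonempty topological space $\Omega$ with Borel $\sigma$-algebra $\mathbb B(\Omega)$, a probability measure $\mu$, and a measurable map $T:\Omega\to\Omega$ with $\mu(T^{-1}B)=\mu(B)$ for all $B\in\mathbb B(\Omega)$. For a finite partition $\mathcal P=\{P_0,\dots,P_l\}\subset\mathbb B(\Omega)$ of $\Omega$: $H(\mathcal P)=-\sum_{P\in\mathcal P}\mu(P)\ln\mu(P)$ (with $0\ln0=0$); $\mathcal P_n$ is the partition consisting of the sets $P_{a_0}\cap T^{-1}(P_{a_1})\cap\dots\cap T^{-(n-1)}(P_{a_{n-1}})$, $a_i\in\{0,\dots,l\}$. Let $\Pi_d$ be the set of permutations of $\{0,1,\dots,d\}$. A vector $(x_0,\dots,x_d)\in\mathbb R^{d+1}$ has ordinal pattern $\pi=(r_0,\dots,r_d)\in\Pi_d$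 if $x_{r_0}\ge x_{r_1}\ge\dots\ge x_{r_d}$ and $r_{l-1}>r_l$ whenever $x_{r_{l-1}}=x_{r_l}$. For a random vector $\mathbf X=(X_1,\dots,X_N)$ and $d\in\mathbb N$, the ordinal partition $\mathcal P^{\mathbf X}(d)$ consists of the sets $P_{(\pi_1,\dots,\pi_N)}=\{\omega: (X_i(T^{d}\omega),X_i(T^{d-1}\omega),\dots,X_i(T\omega),X_i(\omega))\text{ has ordinal pattern }\pi_i\text{ for } i=1,\dots,N\}$, $\pi_i\in\Pi_d$. Permutation entropy: $h^{\mathbf X}_\mu(T,d)=\frac1d H(\mathcal P^{\mathbf X}(d))$. Sorting entropy: $h^{\mathbf X}_{\mu,\triangle}(T,d)=H(\mathcal P^{\mathbf X}(d+1))-H(\mathcal P^{\mathbf X}(d))$. Conditional entropy of ordinal patterns: $h^{\mathbf X}_{\mu,\mathrm{cond}}(T,d)=H(\mathcal P^{\mathbf X}(d)_2)-H(\mathcal P^{\mathbf X}(d))$. *)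

From Stdlib Require Import Reals.
From mathcomp Require Import all_boot all_fingroup.
Set Implicit Arguments. Unset Strict Implicit. Unset Printing Implicit Defensive.

Definition set_ (A : Type) := A -> Prop.

Definition is_topology (Omega : Type) (opens : set_ (set_ Omega)) : Prop :=
  opens (fun _ => False) /\ opens (fun _ => True) /\
  (forall U V, opens U -> opens V -> opens (fun w => U w /\ V w)) /\
  (forall (Fam : set_ (set_ Omega)), (forall U, Fam U -> opens U) ->
      opens (fun w => exists U, Fam U /\ U w)).

Definition is_sigma_algebra (Omega : Type) (F : set_ (set_ Omega)) : Prop :=
  F (fun _ => True) /\
  (forall A, F A -> F (fun w => ~ A w)) /\
  (forall A : nat -> set_ Omega, (forall n, F (A n)) -> F (fun w => exists n, A n w)).

Definition borel (Omega : Type) (opens : set_ (set_ Omega)) (A : set_ Omega) : Prop :=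
  forall F, is_sigma_algebra F -> (forall U, opens U -> F U) -> F A.

Definition borelR : set_ (set_ R) := borel open_set.

Definition is_probability_measure (Omega : Type) (opens : set_ (set_ Omega))
    (mu : set_ Omega -> R) : Prop :=
  (forall A, borel opens A -> Rle 0 (mu A)) /\
  mu (fun _ => True) = R1 /\
  (forall A : nat -> set_ Omega,
     (forall n, borel opens (A n)) ->
     (forall n m w, n <> m -> A n w -> A m w -> False) ->
     infinite_sum (fun n : nat => mu (A n)) (mu (fun w => exists n, A n w))).

Definition preimage (A B : Type) (f : A -> B) (S : set_ B) : set_ A := fun a => S (f a).

Definition mpds (Omega : Type) (opens : set_ (set_ Omega)) (mu : set_ Omega -> R)
    (T : Omega -> Omega) : Prop :=
  (exists w : Omega, True) /\ is_topology opens /\ is_probability_measure opens mu /\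
  (forall B, borel opens B -> borel opens (preimage T B)) /\
  (forall B, borel opens B -> mu (preimage T B) = mu B).

Definition random_vector (Omega : Type) (opens : set_ (set_ Omega)) (N : nat)
    (X : 'I_N -> Omega -> R) : Prop :=
  forall i B, borelR B -> borel opens (preimage (X i) B).

Definition entropy (Omega : Type) (mu : set_ Omega -> R) (I : finType)
    (P : I -> set_ Omega) : R :=
  Ropp (\big[Rplus/R0]_(a : I) Rmult (mu (P a)) (ln (mu (P a)))).

(* The vector (x_0,...,x_d) has ordinal pattern pi = (r_0,...,r_d),
   r_l = pi l:  x_{r_{l-1}} >= x_{r_l}, and r_{l-1} > r_l in case of equality. *)
Definition has_pattern (d : nat) (x : 'I_d.+1 -> R) (pi : {perm 'I_d.+1}) : Prop :=
  forall k : 'I_d,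
    let a := pi (widen_ord (leqnSn d) k) in
    let b := pi (lift ord0 k) in
    Rge (x a) (x b) /\ (x a = x b -> (nat_of_ord b < nat_of_ord a)%N).

Definition pat_index (N d : nat) : finType := {ffun 'I_N -> {perm 'I_d.+1}}.

Definition ordinal_partition (Omega : Type) (T : Omega -> Omega) (N : nat)
    (X : 'I_N -> Omega -> R) (d : nat) (p : pat_index N d) : set_ Omega :=
  fun w => forall i : 'I_N,
    has_pattern (fun j : 'I_d.+1 => X i (iter (d - j) T w)) (p i).

Definition join2 (Omega : Type) (T : Omega -> Omega) (I : finType) (P : I -> set_ Omega)
    (ab : (I * I)%type) : set_ Omega :=
  fun w => P ab.1 w /\ P ab.2 (T w).

Definition perm_entropy (Omega : Type) (mu : set_ Omega -> R) (T : Omega -> Omega)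
    (N : nat) (X : 'I_N -> Omega -> R) (d : nat) : R :=
  Rmult (Rinv (INR d)) (entropy mu (ordinal_partition T X (d:=d))).

Definition sorting_entropy (Omega : Type) (mu : set_ Omega -> R) (T : Omega -> Omega)
    (N : nat) (X : 'I_N -> Omega -> R) (d : nat) : R :=
  Rminus (entropy mu (ordinal_partition T X (d:=d.+1))) (entropy mu (ordinal_partition T X (d:=d))).

Definition cond_entropy (Omega : Type) (mu : set_ Omega -> R) (T : Omega -> Omega)
    (N : nat) (X : 'I_N -> Omega -> R) (d : nat) : R :=
  Rminus (entropy mu (join2 T (ordinal_partition T X (d:=d))))
   (entropy mu (ordinal_partition T X (d:=d))).

From HB Require Import structures.
From Stdlib Require Import Reals Lra Classical.
From Stdlib Require Import FunctionalExtensionality PropExtensionality ClassicalEpsilon.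
From mathcomp Require Import all_boot all_fingroup.
Set Implicit Arguments. Unset Strict Implicit. Unset Printing Implicit Defensive.

(* The ordinal pattern of (x_0, ..., x_{d+1}) determines the patterns of (x_0, ..., x_d)
   and of (x_1, ..., x_{d+1}), so P^X(d+1) refines P^X(d)_2 = P^X(d) v T^-1 P^X(d).
   Since mu(P) ln mu(P) <= mu(P) ln mu(Q) whenever P is contained in Q, refining a
   partition can only increase its entropy: H(P^X(d)_2) <= H(P^X(d+1)), and subtracting
   H(P^X(d)) gives the first inequality.  The second is arithmetic: H(d+1)/(d+1) <= H(d)/d
   rearranges to H(d+1) - H(d) <= H(d)/d. *)

Delimit Scope R_scope with Re.

Definition Rltb (u v : R) : bool := if Rlt_dec u v then true else false.
Definition Reqb (u v : R) : bool := if Req_EM_T u v then true else false.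

Lemma RltbP (u v : R) : reflect (Rlt u v) (Rltb u v).
Proof. by rewrite /Rltb; case: Rlt_dec => h; constructor. Qed.

Lemma ReqbP (u v : R) : reflect (u = v) (Reqb u v).
Proof. by rewrite /Reqb; case: Req_EM_T => h; constructor. Qed.

Section PatternOrder.
Variables (n : nat) (x : 'I_n -> R).
Implicit Types a b c : 'I_n.

(* The strict total order on indices whose increasing enumeration is the
   ordinal pattern of [x]: larger values first, ties broken by larger index. *)
Definition precedes a b : bool :=
  Rltb (x b) (x a) || Reqb (x a) (x b) && (b < a).

Lemma precedesP a b :
  reflect (Rge (x a) (x b) /\ (x a = x b -> (b < a)%N)) (precedes a b).
Proof.
apply: (iffP orP) => [[/RltbP lt_ba | /andP [/ReqbP eq_ab lt_ba]] | [ge_ab tie]].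
- by split; [left | move=> eq_ab; lra].
- by split; [right |].
case: (Rtotal_order (x b) (x a)) => [lt_ba | [eq_ba | lt_ab]].
- by left; apply/RltbP.
- by right; apply/andP; split; [apply/ReqbP | apply: tie].
- lra.
Qed.

Lemma precedes_irr a : precedes a a = false.
Proof. by rewrite /precedes ltnn andbF orbF; apply/RltbP; lra. Qed.

Lemma precedes_trans a b c : precedes a b -> precedes b c -> precedes a c.
Proof.
move=> /precedesP [ge_ab tie_ab] /precedesP [ge_bc tie_bc].
apply/precedesP; split=> [|eq_ac]; first lra.
by apply: ltn_trans (tie_bc _) (tie_ab _); lra.
Qed.

Lemma precedes_asym a b : precedes a b -> precedes b a = false.
Proof. by move=> ab; apply/negP => /(precedes_trans ab); rewrite precedes_irr. Qed.

Lemma precedes_total a b : a != b -> precedes a b || precedes b a.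
Proof.
move=> neq_ab; rewrite /precedes.
case: (Rtotal_order (x a) (x b)) => [lt_ab | [eq_ab | lt_ba]].
- by apply/orP; right; apply/orP; left; apply/RltbP.
- have /ReqbP -> : x a = x b by [].
  have /ReqbP -> : x b = x a by [].
  by case: ltngtP neq_ab => [||/val_inj ->]; rewrite ?orbT ?eqxx.
- by apply/orP; left; apply/orP; left; apply/RltbP.
Qed.

Definition rank a : nat := #|[pred b | precedes b a]|.

Lemma rank_lt a : rank a < n.
Proof.
rewrite -[n]card_ord; apply: proper_card; apply/properP.
by split; [apply/subsetP | exists a; rewrite // inE /= precedes_irr].
Qed.

Lemma rank_mono a b : precedes a b -> rank a < rank b.
Proof.
move=> ab; apply: proper_card; apply/properP; split.
- by apply/subsetP => c; rewrite !inE => /precedes_trans; apply.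
- by exists a; rewrite !inE /= ?precedes_irr.
Qed.

Lemma precedes_rank a b : precedes a b = (rank a < rank b).
Proof.
case ab: (precedes a b); first by rewrite rank_mono.
have [<-|neq_ab] := eqVneq a b; first by rewrite ltnn.
move: (precedes_total neq_ab); rewrite ab /= => /rank_mono ba.
by apply/esym/negbTE; rewrite -leqNgt ltnW.
Qed.

End PatternOrder.

Lemma card_ord_lt n (k : 'I_n) : #|[pred c : 'I_n | c < k]| = k.
Proof.
have inj_widen : injective (widen_ord (ltnW (ltn_ord k))).
  by move=> u v /(congr1 val) /= /val_inj.
rewrite -[RHS]card_ord -(card_image inj_widen); apply: eq_card => c /=.
apply/idP/imageP => [lt_ck | [u _ ->]]; last by rewrite inE /= ltn_ord.
by exists (Ordinal lt_ck) => //; apply: val_inj.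
Qed.

Lemma card_perm_lt n (t : {perm 'I_n}) a :
  #|[pred b | t b < t a]| = t a.
Proof.
rewrite -[RHS]card_ord_lt -(card_image (@perm_inj _ t)); apply: eq_card => c.
apply/imageP/idP => [[b lt_b ->] // | lt_c].
by exists ((t^-1)%g c); rewrite ?inE /= permKV.
Qed.

Section OrdinalPatterns.
Variable d : nat.
Implicit Types (x : 'I_d.+1 -> R) (pi : {perm 'I_d.+1}).

Lemma has_patternP x pi :
  has_pattern x pi <->
  forall k : 'I_d, precedes x (pi (widen_ord (leqnSn d) k)) (pi (lift ord0 k)).
Proof. by split=> h k; apply/precedesP; apply: h. Qed.

Lemma has_pattern_chain x pi : has_pattern x pi ->
  forall k l : 'I_d.+1, k < l -> precedes x (pi k) (pi l).
Proof.
move/has_patternP => adj.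
have step (k l : 'I_d.+1) : l = k.+1 :> nat -> precedes x (pi k) (pi l).
  move=> lE; have lt_kd : k < d by rewrite -ltnS -lE.
  have -> : k = widen_ord (leqnSn d) (Ordinal lt_kd) by apply: val_inj.
  have -> : l = lift ord0 (Ordinal lt_kd) by apply: val_inj; rewrite /= lE.
  exact: adj.
suff gap m (k l : 'I_d.+1) : l = k + m.+1 :> nat -> precedes x (pi k) (pi l).
  by move=> k l lt_kl; apply: (gap (l - k).-1); rewrite prednK ?subn_gt0 // subnKC // ltnW.
elim: m k l => [|m IHm] k l lE; first by apply: step; rewrite lE addn1.
have lt_mid : k + m.+1 < d.+1 by apply: leq_ltn_trans (ltn_ord l); rewrite lE leq_add2l.
apply: (precedes_trans (IHm k (Ordinal lt_mid) erefl)).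
by apply: step; rewrite lE addnS.
Qed.

Lemma has_pattern_precedes x pi : has_pattern x pi ->
  forall a b, precedes x a b = ((pi^-1)%g a < (pi^-1)%g b).
Proof.
move=> /has_pattern_chain chain a b.
case: ltngtP => [lt_ab | lt_ba | /val_inj eq_ab].
- by move: (chain _ _ lt_ab); rewrite !permKV.
- by move: (chain _ _ lt_ba); rewrite !permKV => /precedes_asym.
- by move: (congr1 pi eq_ab); rewrite !permKV => ->; rewrite precedes_irr.
Qed.

Lemma has_pattern_invE x pi a : has_pattern x pi -> (pi^-1)%g a = rank x a :> nat.
Proof.
move=> /has_pattern_precedes xpi; rewrite -(card_perm_lt (pi^-1)%g a).
by apply: eq_card => b; rewrite !inE xpi.
Qed.

Lemma has_pattern_uniq x pi pi' : has_pattern x pi -> has_pattern x pi' -> pi = pi'.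
Proof.
move=> xpi xpi'; suff inv_eq : (pi^-1 = pi'^-1)%g by rewrite -(invgK pi) inv_eq invgK.
apply/permP => a; apply: val_inj.
by rewrite /= (has_pattern_invE a xpi) (has_pattern_invE a xpi').
Qed.

Lemma has_pattern_exists x : exists pi, has_pattern x pi.
Proof.
pose r a : 'I_d.+1 := Ordinal (rank_lt x a).
have r_inj : injective r.
  move=> a b /(congr1 val) /= eq_r; apply/eqP/negPn/negP => /(precedes_total x).
  by rewrite !precedes_rank eq_r ltnn.
have rankE b : rank x b = perm r_inj b by rewrite permE.
exists (perm r_inj)^-1%g; apply/has_patternP => k.
by rewrite precedes_rank !rankE !permKV /= /bump.
Qed.

End OrdinalPatterns.

Lemma has_pattern_comp d e (h : 'I_e.+1 -> 'I_d.+1) x y pi sigma :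
  (forall a b, (h a < h b) = (a < b)) ->
  has_pattern x pi -> has_pattern y pi ->
  has_pattern (x \o h) sigma -> has_pattern (y \o h) sigma.
Proof.
move=> h_mono xpi ypi /has_patternP xh_sigma; apply/has_patternP => k.
have sub z a b : precedes (z \o h) a b = precedes z (h a) (h b) by rewrite /precedes h_mono.
by rewrite sub (has_pattern_precedes ypi) -(has_pattern_precedes xpi) -sub.
Qed.

Lemma set_ext (Omega : Type) (A B : set_ Omega) : (forall w, A w <-> B w) -> A = B.
Proof.
by move=> AB; apply: functional_extensionality => w; apply: propositional_extensionality.
Qed.

Lemma family_ext (Omega : Type) (F : set_ (set_ Omega)) (A B : set_ Omega) :
  (forall w, A w <-> B w) -> F A -> F B.
Proof. by move=> /set_ext ->. Qed.

Section SigmaAlgebra.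
Variables (Omega : Type) (F : set_ (set_ Omega)).
Hypothesis sigmaF : is_sigma_algebra F.

Lemma sigma_setT : F (fun _ => True).
Proof. exact: sigmaF.1. Qed.

Lemma sigma_setC A : F A -> F (fun w => ~ A w).
Proof. exact: sigmaF.2.1. Qed.

Lemma sigma_bigcup (A : nat -> set_ Omega) :
  (forall n, F (A n)) -> F (fun w => exists n, A n w).
Proof. exact: sigmaF.2.2. Qed.

Lemma sigma_set0 : F (fun _ => False).
Proof. by apply: (family_ext _ (sigma_setC sigma_setT)). Qed.

Lemma sigma_setU A B : F A -> F B -> F (fun w => A w \/ B w).
Proof.
move=> FA FB; apply: (family_ext (A := fun w => exists n, (if n is 0 then A else B) w)).
  by move=> w; split=> [[[|n] ?] | [?|?]]; [left | right | exists 0 | exists 1].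
by apply: sigma_bigcup => -[].
Qed.

Lemma sigma_setI A B : F A -> F B -> F (fun w => A w /\ B w).
Proof.
move=> FA FB; apply: (family_ext (A := fun w => ~ (~ A w \/ ~ B w))).
  by move=> w; split=> [/not_or_and [/NNPP ? /NNPP ?] | [? ?] []].
by apply/sigma_setC/sigma_setU; apply: sigma_setC.
Qed.

Lemma sigma_bigcap_seq (I : eqType) (s : seq I) (A : I -> set_ Omega) :
  (forall i, F (A i)) -> F (fun w => forall i, i \in s -> A i w).
Proof.
move=> FA; elim: s => [|i s IHs].
  by apply: (family_ext _ sigma_setT).
apply: (family_ext (A := fun w => A i w /\ forall j, j \in s -> A j w)); last exact: sigma_setI.
move=> w; split=> [[Ai As] j | Ais].
  by rewrite inE => /orP [/eqP -> // | /As].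
by split=> [|j js]; apply: Ais; rewrite inE ?eqxx ?js ?orbT.
Qed.

Lemma sigma_bigcap (I : finType) (A : I -> set_ Omega) :
  (forall i, F (A i)) -> F (fun w => forall i, A i w).
Proof.
move=> FA; apply: (family_ext (A := fun w => forall i, i \in index_enum I -> A i w)).
  by move=> w; split=> [Aw i | Aw i _]; apply: Aw; rewrite ?mem_index_enum.
exact: sigma_bigcap_seq.
Qed.

Lemma sigma_bigcup_seq (I : eqType) (s : seq I) (A : I -> set_ Omega) :
  (forall i, F (A i)) -> F (fun w => exists i, i \in s /\ A i w).
Proof.
move=> FA; elim: s => [|i s IHs].
  by apply: (family_ext _ sigma_set0) => w; split=> [[] | [i []]]; rewrite in_nil.
apply: (family_ext (A := fun w => A i w \/ exists j, j \in s /\ A j w)); last exact: sigma_setU.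
move=> w; split=> [[Ai | [j [js Aj]]] | [j []]]; first by exists i; rewrite mem_head.
  by exists j; rewrite inE js orbT.
by rewrite inE => /orP [/eqP -> | js Aj]; [left | right; exists j].
Qed.

End SigmaAlgebra.

Lemma borel_sigma_algebra (Omega : Type) (opens : set_ (set_ Omega)) :
  is_sigma_algebra (borel opens).
Proof.
split; [|split] => [G sigmaG _ | A BA G sigmaG openG | A BA G sigmaG openG].
- exact: sigma_setT.
- by apply: sigma_setC => //; apply: BA.
- by apply: sigma_bigcup => // n; apply: BA.
Qed.

Lemma infinite_sum_eventually0 (u : nat -> R) m :
  (forall n, m < n -> u n = R0) -> infinite_sum u (sum_f_R0 u m).
Proof.
move=> u0 eps eps_gt0; exists m => n /leP le_mn.
suff -> : sum_f_R0 u n = sum_f_R0 u m by rewrite /Rdist Rminus_diag Rabs_R0.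
elim: n le_mn => [|n IHn]; first by rewrite leqn0 => /eqP ->.
rewrite leq_eqVlt => /orP [/eqP -> // | lt_mn] /=.
by rewrite IHn // u0 // Rplus_0_r.
Qed.

Section Refinement.
Variable Omega : Type.
Implicit Types (I J : Type).

Definition cells_disjoint I (P : I -> set_ Omega) : Prop :=
  forall i j w, P i w -> P j w -> i = j.

Definition covers I (P : I -> set_ Omega) : Prop := forall w, exists i, P i w.

Definition refines I J (P : I -> set_ Omega) (Q : J -> set_ Omega) : Prop :=
  forall i, exists j, forall w, P i w -> Q j w.

End Refinement.

Section FinitelyAdditive.
Variables (Omega : Type) (opens : set_ (set_ Omega)) (mu : set_ Omega -> R).
Hypothesis mu_prob : is_probability_measure opens mu.
Local Notation measurable := (borel opens).

Lemma mu_ge0 A : measurable A -> Rle 0 (mu A).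
Proof. exact: mu_prob.1. Qed.

Lemma mu_set0 : mu (fun _ => False) = R0.
Proof.
have meas0 := sigma_set0 (borel_sigma_algebra opens).
have := mu_prob.2.2 (fun _ _ => False) (fun _ => meas0) (fun _ _ _ _ f _ => f).
rewrite (@set_ext _ (fun w => exists n : nat, False) (fun _ => False)) => [sum0 | w].
  (* the partial sum [c + c] of the series is bounded by its sum [c] *)
  have /= le2 := sum_incr _ 1 _ (sum0 : Un_cv (sum_f_R0 _) _) (fun _ => mu_ge0 meas0).
  by apply: Rle_antisym; [lra | apply: mu_ge0].
by split=> [[]|].
Qed.

Lemma mu_setU A B : measurable A -> measurable B -> (forall w, A w -> B w -> False) ->
  mu (fun w => A w \/ B w) = (mu A + mu B)%Re.
Proof.
move=> mA mB AB.
pose C n : set_ Omega := if n is 0 then A else if n is 1 then B else (fun _ => False).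
have mC n : measurable (C n).
  by case: n => [|[|n]] //; apply: sigma_set0 (borel_sigma_algebra opens).
have disjC n m w : n <> m -> C n w -> C m w -> False.
  case: n m => [|[|n]] [|[|m]] //= nm Cn Cm;
    first [exact: AB Cn Cm | exact: AB Cm Cn | by apply: nm].
have := mu_prob.2.2 C mC disjC.
rewrite (@set_ext _ (fun w => exists n, C n w) (fun w => A w \/ B w)) => [sumC | w]; last first.
  by split=> [[[|[|n]]] | []]; [left | right | | exists 0 | exists 1].
apply: uniqueness_sum sumC _.
have -> : (mu A + mu B)%Re = sum_f_R0 (fun n => mu (C n)) 1 by [].
by apply: infinite_sum_eventually0 => -[|[|n]] //= _; apply: mu_set0.
Qed.

Lemma mu_bigcup_seq (I : eqType) (s : seq I) (A : I -> set_ Omega) :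
  uniq s -> (forall i, measurable (A i)) -> cells_disjoint A ->
  mu (fun w => exists i, i \in s /\ A i w) = \big[Rplus/R0]_(i <- s) mu (A i).
Proof.
move=> uniq_s mA disjA; elim: s uniq_s => [_ | i s IHs /andP [i_notin_s uniq_s]].
  by rewrite big_nil -mu_set0; f_equal; apply: set_ext => w; split=> [[j []]|].
rewrite big_cons -IHs // -mu_setU //; last 2 first.
- exact: (sigma_bigcup_seq (borel_sigma_algebra opens) s mA).
- by move=> w Ai [j [js /(disjA _ _ _ Ai) eq_ij]]; rewrite eq_ij js in i_notin_s.
f_equal; apply: set_ext => w; split=> [[j []] | [Ai | [j [js Aj]]]].
- by rewrite inE => /orP [/eqP -> | js Aj]; [left | right; exists j].
- by exists i; rewrite mem_head.
- by exists j; rewrite inE js orbT.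
Qed.

End FinitelyAdditive.

Lemma mul_ln_le (a b : R) : Rle 0 a -> Rle a b -> Rle (a * ln a) (a * ln b).
Proof.
move=> /Rle_lt_or_eq_dec [a_gt0 | <-] le_ab; last by rewrite !Rmult_0_l; apply: Rle_refl.
apply: Rmult_le_compat_l; first lra.
by case: (Rle_lt_or_eq_dec _ _ le_ab) => [/(ln_increasing _ _ a_gt0) | ->]; lra.
Qed.

HB.instance Definition _ := Monoid.isComLaw.Build R R0 Rplus
  (fun x y z => esym (Rplus_assoc x y z)) Rplus_comm Rplus_0_l.

Section EntropyRefinement.
Variables (Omega : Type) (opens : set_ (set_ Omega)) (mu : set_ Omega -> R).
Hypothesis mu_prob : is_probability_measure opens mu.
Variables (I J : finType) (P : I -> set_ Omega) (Q : J -> set_ Omega).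
Hypotheses (mP : forall i, borel opens (P i)) (disjP : cells_disjoint P) (coverP : covers P).
Hypothesis disjQ : cells_disjoint Q.

Lemma mu_refined_cell (f : I -> J) : (forall i w, P i w -> Q (f i) w) ->
  forall j, mu (Q j) = \big[Rplus/R0]_(i | f i == j) mu (P i).
Proof.
move=> PQf j; rewrite -big_filter -(mu_bigcup_seq mu_prob) ?filter_uniq ?index_enum_uniq //.
f_equal; apply: set_ext => w; split=> [Qjw | [i []]].
  have [i Piw] := coverP w; exists i; rewrite mem_filter mem_index_enum andbT.
  by rewrite (disjQ (PQf _ _ Piw) Qjw).
by rewrite mem_filter mem_index_enum andbT => /eqP <- /PQf.
Qed.

Lemma entropy_le_refines : refines P Q -> Rle (entropy mu Q) (entropy mu P).
Proof.
move=> /(_ _) /constructive_indefinite_description PQ.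
pose f i := proj1_sig (PQ i); have PQf i w : P i w -> Q (f i) w := proj2_sig (PQ i) w.
have muQ := mu_refined_cell PQf.
have sub_cell i : Rle (mu (P i)) (mu (Q (f i))).
  rewrite muQ (bigD1 i) //=; set rest := \big[_/_]_(k | _) _.
  have : Rle 0 rest by apply: big_ind => [|*|k _]; [lra | lra | apply: (mu_ge0 mu_prob)].
  lra.
rewrite /entropy; apply: Ropp_le_contravar; rewrite (partition_big f xpredT) //=.
apply: (big_ind2 Rle); [lra | move=> *; lra | move=> j _].
rewrite (eq_bigl (fun i => f i == j)) // {1}muQ.
rewrite (big_morph (Rmult^~ _) (op1 := Rplus)
  (fun x y => Rmult_plus_distr_r x y _) (Rmult_0_l _)).
apply: (big_ind2 Rle); [lra | move=> *; lra | move=> i /eqP fiE].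
by rewrite -fiE; apply: mul_ln_le; [apply: (mu_ge0 mu_prob) | apply: sub_cell].
Qed.

End EntropyRefinement.

(* Every rational number is of the form [(m - k) / n] with [m k n : nat]. *)
Definition rat_point (n m k : nat) : R := ((INR m - INR k) / INR n)%Re.

Lemma IZR_INR_sub (z : Z) : exists m k : nat, IZR z = (INR m - INR k)%Re.
Proof.
case: z => [|p|p]; [exists 0%N, 0%N | exists (Pos.to_nat p), 0%N | exists 0%N, (Pos.to_nat p)].
- by rewrite /= Rminus_diag.
- by rewrite /= INR_IPR Rminus_0_r.
- by rewrite /= INR_IPR Rminus_0_l.
Qed.

Lemma rat_point_between (a b : R) : Rlt a b ->
  exists n m k, Rlt a (rat_point n m k) /\ Rlt (rat_point n m k) b.
Proof.
move=> lt_ab; have [n [inv_n_lt n_gt0]] := archimed_cor1 (b - a) ltac:(lra).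
have {}n_gt0 : Rlt 0 (INR n) := lt_0_INR _ n_gt0.
have [up_gt up_le] := archimed (a * INR n).
have [m [k mkE]] := IZR_INR_sub (up (a * INR n)).
exists n, m, k; rewrite /rat_point -mkE; split.
- by apply: (Rmult_lt_reg_r (INR n)) => //; rewrite Rmult_assoc Rinv_l; lra.
- suff : Rle (IZR (up (a * INR n)) / INR n) (a + / INR n) by lra.
  apply: (Rmult_le_reg_r (INR n)) => //.
  by rewrite Rmult_assoc Rinv_l ?Rmult_plus_distr_r ?Rinv_l; lra.
Qed.

Lemma open_set_lt (q : R) : open_set (fun y => Rlt y q).
Proof.
move=> x lt_xq; exists (mkposreal (q - x) ltac:(lra)) => y; rewrite /disc /=.
by have := Rle_abs (y - x); lra.
Qed.

Lemma open_set_gt (q : R) : open_set (fun y => Rlt q y).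
Proof.
move=> x lt_qx; exists (mkposreal (x - q) ltac:(lra)) => y; rewrite /disc /=.
by have := Rle_abs (- (y - x)); rewrite Rabs_Ropp; lra.
Qed.

Section MeasurableFunctions.
Variables (Omega : Type) (opens : set_ (set_ Omega)).

Definition measurable_fun (f : Omega -> R) : Prop :=
  forall B, borelR B -> borel opens (preimage f B).

Lemma measurable_lt f g : measurable_fun f -> measurable_fun g ->
  borel opens (fun w => Rlt (f w) (g w)).
Proof.
move=> mf mg; have sigmaB := borel_sigma_algebra opens.
apply: (@family_ext _ (borel opens) (fun w => exists n m k,
  Rlt (f w) (rat_point n m k) /\ Rlt (rat_point n m k) (g w))).
  by move=> w; split=> [[n [m [k ?]]] | /rat_point_between]; first lra.
do 3![apply: (sigma_bigcup sigmaB) => ?]; apply: (sigma_setI sigmaB).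
- by apply: (mf (fun y => Rlt y _)) => F _ openF; apply/openF/open_set_lt.
- by apply: (mg (fun y => Rlt _ y)) => F _ openF; apply/openF/open_set_gt.
Qed.

Lemma measurable_le f g : measurable_fun f -> measurable_fun g ->
  borel opens (fun w => Rle (f w) (g w)).
Proof.
move=> mf mg.
apply: (family_ext _ (sigma_setC (borel_sigma_algebra opens) (measurable_lt mg mf))).
by move=> w; split=> [/Rnot_lt_le | /Rle_not_lt].
Qed.

End MeasurableFunctions.

Section OrdinalPartition.
Variables (Omega : Type) (opens : set_ (set_ Omega)) (T : Omega -> Omega).
Variables (N : nat) (X : 'I_N -> Omega -> R).
Hypothesis mT : forall B, borel opens B -> borel opens (preimage T B).
Hypothesis mX : random_vector opens X.

Definition window d (i : 'I_N) (w : Omega) (j : 'I_d.+1) : R := X i (iter (d - j) T w).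
Arguments window : clear implicits.

Lemma window_lift d i w : window d i w = window d.+1 i w \o lift ord0.
Proof. by apply: functional_extensionality => j; rewrite /window /= subSS. Qed.

Lemma window_widen d i w : window d i (T w) = window d.+1 i w \o widen_ord (leqnSn d.+1).
Proof.
apply: functional_extensionality => j.
by rewrite /window /= subSn -?iterSr // -ltnS.
Qed.

Lemma measurable_iter k B : borel opens B -> borel opens (preimage (iter k T) B).
Proof.
elim: k B => [|k IHk] B mB //.
apply: (family_ext (A := preimage (iter k T) (preimage T B))) (IHk _ (mT mB)).
by move=> w; rewrite /preimage iterS.
Qed.

Lemma measurable_precedes d i (a b : 'I_d.+1) :
  borel opens (fun w => precedes (window d i w) a b).
Proof.
have mXT k : measurable_fun opens (fun w => X i (iter k T w)).
  by move=> B /(mX i); apply: measurable_iter.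
case: (ltnP b a) => [lt_ba | le_ab].
- apply: (family_ext _ (measurable_le (mXT (d - b)) (mXT (d - a)))) => w.
  by split=> [le | /precedesP [/Rge_le //]]; apply/precedesP; split=> //; apply: Rle_ge.
- apply: (family_ext _ (measurable_lt (mXT (d - b)) (mXT (d - a)))) => w.
  split=> [lt | /precedesP [/Rge_gt_or_eq_dec [//|eq_ab] /(_ eq_ab)]]; last by rewrite ltnNge le_ab.
  by apply/precedesP; rewrite /window; split=> [|eq_ab]; [left | ]; lra.
Qed.

Lemma measurable_ordinal_partition d (p : pat_index N d) :
  borel opens (ordinal_partition T X p).
Proof.
have sigmaB := borel_sigma_algebra opens.
apply: (@family_ext _ (borel opens) (fun w => forall i (k : 'I_d),
  precedes (window d i w) (p i (widen_ord (leqnSn d) k)) (p i (lift ord0 k)))).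
  by move=> w; split=> cell i; apply/has_patternP; apply: cell.
by do 2![apply: (sigma_bigcap sigmaB) => ?]; apply: measurable_precedes.
Qed.

Lemma ordinal_partition_disjoint d : cells_disjoint (@ordinal_partition _ T _ X d).
Proof.
by move=> p p' w cell cell'; apply/ffunP => i; apply: has_pattern_uniq (cell i) (cell' i).
Qed.

Lemma ordinal_partition_covers d : covers (@ordinal_partition _ T _ X d).
Proof.
move=> w.
have /(_ _) /constructive_indefinite_description pat i := has_pattern_exists (window d i w).
by exists [ffun i => proj1_sig (pat i)] => i; rewrite ffunE; apply: proj2_sig.
Qed.

Lemma join2_disjoint (I : finType) (P : I -> set_ Omega) :
  cells_disjoint P -> cells_disjoint (join2 T P).
Proof.
move=> disjP [i1 i2] [j1 j2] w [/= Pi1 Pi2] [/= Pj1 Pj2].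
by rewrite (disjP _ _ _ Pi1 Pj1) (disjP _ _ _ Pi2 Pj2).
Qed.

Lemma ordinal_partition_refines_join2 d :
  refines (@ordinal_partition _ T _ X d.+1) (join2 T (@ordinal_partition _ T _ X d)).
Proof.
move=> p; have [[w0 cell0] | empty] := classic (exists w0, ordinal_partition T X p w0); last first.
  by exists ([ffun => 1%g], [ffun => 1%g]) => w cell; case: empty; exists w.
have [p1 cell1] := ordinal_partition_covers d w0.
have [p2 cell2] := ordinal_partition_covers d (T w0).
exists (p1, p2) => w cell; split=> i /=.
- change (has_pattern (window d i w) (p1 i)); rewrite window_lift.
  apply: has_pattern_comp (cell0 i) (cell i) _; last by rewrite -window_lift; apply: cell1.
  by move=> a b; rewrite /= /bump.
- change (has_pattern (window d i (T w)) (p2 i)); rewrite window_widen.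
  apply: has_pattern_comp (cell0 i) (cell i) _; last by rewrite -window_widen; apply: cell2.
  by [].
Qed.

End OrdinalPartition.

Lemma Rminus_le_of_div_succ_le (x y n : R) : Rlt 0 n ->
  Rle (/ (n + 1) * y) (/ n * x) -> Rle (y - x) (/ n * x).
Proof.
move=> n_gt0 /(Rmult_le_compat_l (n + 1)) le_y; have {le_y} := le_y ltac:(lra).
have -> : ((n + 1) * (/ (n + 1) * y) = y)%Re by field; lra.
have -> : ((n + 1) * (/ n * x) = x + / n * x)%Re by field; lra.
lra.
Qed.

Theorem lemma3 (Omega : Type) (opens : (Omega -> Prop) -> Prop)
  (mu : (Omega -> Prop) -> R) (T : Omega -> Omega) (N : nat) (X : 'I_N -> Omega -> R) :
  mpds opens mu T -> random_vector opens X ->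
  (forall d : nat, (1 <= d)%N ->
     Rle (cond_entropy mu T X d) (sorting_entropy mu T X d)) /\
  (forall d0 : nat, (1 <= d0)%N ->
     Rle (perm_entropy mu T X d0.+1) (perm_entropy mu T X d0) ->
     Rle (cond_entropy mu T X d0) (sorting_entropy mu T X d0) /\
     Rle (sorting_entropy mu T X d0) (perm_entropy mu T X d0)).
Proof.
move=> [_ [_ [mu_prob [mT _]]]] mX.
have cond_le_sorting d : Rle (cond_entropy mu T X d) (sorting_entropy mu T X d).
  apply: Rplus_le_compat_r; apply: (entropy_le_refines mu_prob).
  - exact: measurable_ordinal_partition.
  - exact: ordinal_partition_disjoint.
  - exact: ordinal_partition_covers.
  - exact/join2_disjoint/ordinal_partition_disjoint.
  - exact: ordinal_partition_refines_join2.
split=> [d _ | d0 d0_gt0 perm_le]; first exact: cond_le_sorting.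
split; first exact: cond_le_sorting.
apply: Rminus_le_of_div_succ_le; first exact: lt_0_INR (elimT ltP d0_gt0).
by rewrite -S_INR.
Qed.
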